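(* Let $n\ge 1$, let $t\in[0,1]$ and let $g\in A_n$ be an even permutation. Then there exist even permutations $h,k\in A_n$ with $g=hk$ such that $|\mu_h-t\mu_g|\le \tfrac32$ and $|\mu_k-(1-t)\mu_g|\le\tfrac32$.
   Context: For a permutation $\pi$ of $\{1,\dots,n\}$, $\mu_\pi\in\{0,\dots,n\}$ denotes the number of points moved by $\pi$. *)

From mathcomp Require Import all_boot all_order all_algebra all_fingroup all_solvable.
Set Implicit Arguments. Unset Strict Implicit. Unset Printing Implicit Defensive.

Definition mu (n : nat) (s : 'S_n) : nat := #|[set x | s x != x]|.

From mathcomp Require Import all_boot all_order all_algebra all_fingroup all_solvable.
From mathcomp Require Import alt.
From mathcomp Require Import ring lra zify.
Import Order.TTheory GRing.Theory Num.Theory.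
Local Open Scope ring_scope.
Set Implicit Arguments. Unset Strict Implicit. Unset Printing Implicit Defensive.

(* Induction on the number of moved points.  If g moves d and e = g d, write
   g = g' c with c a 3-cycle on d, e and a third moved point, chosen so that g'
   fixes d and moves fewer points.  The factors k of g with mu k close to any
   prescribed x are then 1, c, and k' c for the corresponding factors k' of g'.
   The last ones satisfy mu (k' c) = mu k' + (mu g - mu g') as soon as k' agrees
   with g' on the at most two points of the support of c that g' still moves;
   this is guaranteed by asking every nontrivial factor k to agree with g at d
   and at g d. *)

Section Support.
Variable n : nat.
Implicit Types g k c : 'S_n.

Definition supp g := [set x | g x != x].

Lemma muE g : mu g = #|supp g|.
Proof. by []. Qed.

Lemma supp1 : supp 1%g = set0.
Proof. by apply/setP => x; rewrite !inE perm1 eqxx. Qed.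

Lemma mu1 : mu (1 : 'S_n)%g = 0%N.
Proof. by rewrite muE supp1 cards0. Qed.

Lemma supp_fix k g x : supp k \subset supp g -> g x = x -> k x = x.
Proof.
move=> /subsetP /(_ x); rewrite !inE => sub_kg gx.
by apply/eqP; apply: contraTT isT => /sub_kg; rewrite gx eqxx.
Qed.

Lemma supp_mul k c : supp (k * c)%g \subset supp k :|: supp c.
Proof.
apply/subsetP => x; rewrite !inE permM.
by case: (eqVneq (k x) x) => [->|].
Qed.

Lemma supp_mulU k c :
  {in supp c, forall x, c (k x) != x} -> supp (k * c)%g = supp k :|: supp c.
Proof.
move=> ckx; apply/setP => x; rewrite !inE permM.
case: (eqVneq (c x) x) => cx; last by rewrite orbT ckx // inE cx.
rewrite orbF; congr negb; apply/eqP/eqP => [kcx|->//].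
by apply: (perm_inj (s := c)); rewrite kcx cx.
Qed.

Lemma mu_mul_le k c : (mu (k * c)%g <= mu k + mu c)%N.
Proof. by rewrite !muE (leq_trans (subset_leq_card (supp_mul k c))) ?leq_card_setU. Qed.

Lemma mu_mul_gt g c d : supp c \subset supp (g * c)%g -> d \in supp c -> g d = d ->
  (mu g < mu (g * c)%g)%N.
Proof.
move=> sub_c dc gd; rewrite !muE; apply: proper_card.
have -> : supp (g * c)%g = supp g :|: supp c.
  by apply: supp_mulU => y /(subsetP sub_c); rewrite inE permM.
apply/properP; split; first exact: subsetUl.
exists d; first by rewrite in_setU dc orbT.
by rewrite inE gd eqxx.
Qed.

Lemma mu_mul_agree g c k :
  supp c \subset supp (g * c)%g -> supp k \subset supp g ->
  {in supp c :&: supp g, k =1 g} ->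
  (mu (k * c)%g + mu g = mu k + mu (g * c)%g)%N.
Proof.
move=> sub_c sub_k kg.
have gcx x : x \in supp c -> c (g x) != x.
  by move=> /(subsetP sub_c); rewrite inE permM.
have kcx x : x \in supp c -> c (k x) != x /\ (x \in supp k) = (x \in supp g).
  move=> xc; case xg: (x \in supp g).
    have kx : k x = g x by apply: kg; rewrite inE xc xg.
    split; first by rewrite kx gcx.
    by move: xg; rewrite !inE kx.
  have kx : k x = x.
    by apply: supp_fix sub_k _; apply/eqP; move: xg; rewrite inE => /negbFE.
  by move: xc; rewrite !inE kx eqxx.
have EI : supp k :&: supp c = supp g :&: supp c.
  apply/setP => x; rewrite !in_setI; case xc: (x \in supp c); last by rewrite !andbF.
  by rewrite !andbT (kcx x xc).2.
rewrite !muE (supp_mulU (fun x xc => (kcx x xc).1)) (supp_mulU gcx).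
have := cardsUI (supp k) (supp c); have := cardsUI (supp g) (supp c).
by rewrite EI; lia.
Qed.
End Support.

Section Cycle3.
Variables (n : nat) (d e w : 'I_n).
Hypotheses (de : d != e) (dw : d != w) (ew : e != w).

Definition cycle3 : 'S_n := (tperm d e * tperm d w)%g.

Lemma cycle3L : cycle3 d = e.
Proof. by rewrite permM tpermL tpermD // eq_sym. Qed.

Lemma cycle3M : cycle3 e = w.
Proof. by rewrite permM tpermR tpermL. Qed.

Lemma cycle3R : cycle3 w = d.
Proof. by rewrite permM (tpermD dw ew) tpermR. Qed.

Lemma cycle3D x : x != d -> x != e -> x != w -> cycle3 x = x.
Proof. by move=> xd xe xw; rewrite permM !tpermD // eq_sym. Qed.

Lemma odd_cycle3 : odd_perm cycle3 = false.
Proof. by rewrite odd_permM !odd_tperm de dw. Qed.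

Lemma supp_cycle3 : supp cycle3 = [set d; e; w].
Proof.
apply/setP => x; rewrite !inE.
have [->|xd] := eqVneq x d; first by rewrite cycle3L eq_sym de.
have [->|xe] := eqVneq x e; first by rewrite cycle3M eq_sym ew.
have [->|xw] := eqVneq x w; first by rewrite cycle3R dw.
by rewrite cycle3D // eqxx.
Qed.

Lemma mu_cycle3 : mu cycle3 = 3%N.
Proof.
rewrite muE supp_cycle3 -setUA cardsU1 cards2 ew !inE.
by rewrite (negbTE de) (negbTE dw).
Qed.
End Cycle3.

Section BalancedFactors.
Variables (R : realFieldType) (n : nat).
Local Notation Alt := ('Alt_('I_n))%g.
Implicit Types (g k c : 'S_n) (d : 'I_n) (x : R).

(* The condition at g d is waived when d and g d are swapped by g: the 3-cycle
   peeled off g then agrees with g at d only. *)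
Definition tracks g k d :=
  k != 1%g -> g d != d -> k d = g d /\ (g (g d) != d -> k (g d) = g (g d)).

Definition balanced g k x :=
  `|(mu k)%:R - x| <= 3 / 2 /\ `|(mu (g * k^-1)%g)%:R - ((mu g)%:R - x)| <= 3 / 2.

Definition balanced_factors g d := forall x, 0 <= x <= (mu g)%:R ->
  exists2 k, [/\ k \in Alt, supp k \subset supp g & tracks g k d] & balanced g k x.

Lemma tracks1 g d : tracks g 1 d.
Proof. by rewrite /tracks eqxx. Qed.

Lemma balanced1 g x : 0 <= x <= 3 / 2 -> balanced g 1 x.
Proof.
by case/andP=> x0 x1; rewrite /balanced invg1 mulg1 mu1 !ler_norml; lra.
Qed.

Lemma balanced_cycle3 g c x : mu c = 3%N -> (mu g <= mu (g * c^-1)%g + 3)%N ->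
  3 / 2 <= x <= (mu g)%:R - (mu (g * c^-1)%g)%:R + 3 / 2 -> balanced g c x.
Proof.
move=> mu_c; rewrite -(ler_nat R) natrD => le_g /andP[x1 x2].
by rewrite /balanced mu_c !ler_norml; lra.
Qed.

Lemma balanced_mulr g c k x :
  (mu (k * c)%g + mu (g * c^-1)%g = mu k + mu g)%N ->
  balanced (g * c^-1) k (x - ((mu g)%:R - (mu (g * c^-1)%g)%:R)) ->
  balanced g (k * c) x.
Proof.
move=> /(congr1 (fun m => m%:R : R)); rewrite !natrD => mu_kc.
rewrite /balanced invMg mulgA !ler_norml; lra.
Qed.

Lemma balanced_factors1 d : balanced_factors 1 d.
Proof.
move=> x; rewrite mu1 => /andP[x0 x1].
by exists 1%g; [rewrite group1 supp1 sub0set; split=> //; apply: tracks1 |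
                apply: balanced1; lra].
Qed.

Section Induction.
Variable g : 'S_n.
Hypothesis gA : g \in Alt.
Hypothesis IH : forall g' d', (mu g' < mu g)%N -> g' \in Alt -> balanced_factors g' d'.

Lemma balanced_factors_step c d d' :
  c \in Alt -> mu c = 3%N -> supp c \subset supp g -> g d != d -> tracks g c d ->
  (forall k, k != 1%g -> supp k \subset supp (g * c^-1)%g -> tracks (g * c^-1)%g k d' ->
     {in supp c :&: supp (g * c^-1)%g, k =1 (g * c^-1)%g}) ->
  balanced_factors g d.
Proof.
move=> cA mu_c sub_c gd track_c agree.
set g' := (g * c^-1)%g.
have Eg : g = (g' * c)%g by rewrite mulgKV.
have c1 : c != 1%g by apply/eqP=> c1; move: mu_c; rewrite c1 mu1.
have [cd cgd] := track_c c1 gd.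
have g'd : g' d = d by rewrite permM -cd permK.
have g'gd : g (g d) != d -> g' (g d) = g d by move=> ggd; rewrite permM -cgd // permK.
have sub_cg' : supp c \subset supp (g' * c) by rewrite -Eg.
have supp_g : supp g = supp g' :|: supp c.
  by rewrite {1}Eg; apply: supp_mulU => y /(subsetP sub_cg'); rewrite inE permM.
have lt_g' : (mu g' < mu g)%N.
  by rewrite [in mu g]Eg; apply: mu_mul_gt sub_cg' _ g'd; rewrite inE cd.
have le_g : (mu g <= mu g' + 3)%N by rewrite -mu_c [in mu g]Eg mu_mul_le.
have g'A : g' \in Alt by rewrite groupM ?groupV.
move=> x /andP[x0 xg].
have [x_small|x_gt] := lerP x (3 / 2).
  by exists 1%g; [split; [exact: group1 | rewrite supp1 sub0set | exact: tracks1] |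
                  apply: balanced1; lra].
have [x_mid|x_big] := lerP x ((mu g)%:R - (mu g')%:R + 3 / 2).
  by exists c; [split | apply: balanced_cycle3 => //; lra].
have lt_gR : (mu g')%:R < (mu g)%:R :> R by rewrite ltr_nat.
have bf_g' : balanced_factors g' d' by apply: IH.
have [k [kA sub_k track_k] bal_k] := bf_g' (x - ((mu g)%:R - (mu g')%:R))
  ltac:(apply/andP; split; lra).
have k1 : k != 1%g.
  by apply/eqP=> k1; move: bal_k; rewrite /balanced k1 mu1 !ler_norml; lra.
exists (k * c)%g.
  split; first by rewrite groupM.
    by rewrite supp_g; apply: subset_trans (supp_mul k c) _; rewrite setSU.
  move=> _ _; rewrite !permM (supp_fix sub_k g'd) cd; split=> // ggd.
  by rewrite (supp_fix sub_k (g'gd ggd)) cgd.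
apply: balanced_mulr bal_k; rewrite [in mu g]Eg.
by apply: mu_mul_agree => //; apply: agree.
Qed.

Lemma balanced_factors_cycle d : g d != d -> g (g d) != d -> balanced_factors g d.
Proof.
set e := g d; set w := g e => gd ggd.
have de : d != e by rewrite eq_sym.
have dw : d != w by rewrite eq_sym.
have ew : e != w by apply: contraNneq gd => /perm_inj <-.
have c3L := cycle3L de ew; have c3M := cycle3M d e w.
apply: (balanced_factors_step (c := cycle3 d e w) (d' := w) _ _ _ gd).
- by rewrite Alt_even odd_cycle3.
- exact: mu_cycle3.
- rewrite supp_cycle3 //; apply/subsetP => y; rewrite !inE -orbA => /or3P[] /eqP-> //.
  + by rewrite eq_sym.
  + by apply: contraNneq ew => /perm_inj ->.
- by move=> _ _; rewrite c3L c3M.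
move=> k k1 _ track_k y; rewrite in_setI supp_cycle3 // !inE -orbA permM.
case/andP=> /or3P[] /eqP->.
- by rewrite -/e (canLR (permK _) (esym c3L)) eqxx.
- by rewrite -/w (canLR (permK _) (esym c3M)) eqxx.
- by move=> g'w; have [] := track_k k1; rewrite permM.
Qed.

Lemma balanced_factors_swap d f :
  g d != d -> g (g d) = d -> f != d -> f != g d -> g f != f -> balanced_factors g d.
Proof.
set e := g d => gd ge fd fe gf.
have de : d != e by rewrite eq_sym.
have [df ef] : d != f /\ e != f by rewrite ![_ == f]eq_sym.
have c3L := cycle3L de ef; have c3R := cycle3R df ef.
have gfd : g f != d by rewrite -ge (inj_eq perm_inj).
have gfe : g f != e by rewrite (inj_eq perm_inj).
have c_gf : cycle3 d e f (g f) = g f by apply: cycle3D.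
apply: (balanced_factors_step (c := cycle3 d e f) (d' := e) _ _ _ gd).
- by rewrite Alt_even odd_cycle3.
- exact: mu_cycle3.
- rewrite supp_cycle3 //; apply/subsetP => y; rewrite !inE -orbA => /or3P[] /eqP-> //.
  by rewrite ge.
- by move=> _ _; rewrite c3L -/e ge eqxx.
move=> k k1 _ track_k y; rewrite in_setI supp_cycle3 // !inE -orbA permM.
have g'e : (g * (cycle3 d e f)^-1)%g e = f.
  by rewrite permM ge (canLR (permK _) (esym c3R)).
have g'f : (g * (cycle3 d e f)^-1)%g f = g f.
  by rewrite permM (canLR (permK _) (esym c_gf)).
have [ke kf] := track_k k1 ltac:(by rewrite g'e eq_sym).
rewrite g'e g'f in ke kf.
case/andP=> /or3P[] /eqP->.
- by rewrite -/e (canLR (permK _) (esym c3L)) eqxx.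
- by rewrite -permM g'e.
- by rewrite -permM g'f kf.
Qed.

Lemma balanced_factors_moved d : g d != d -> balanced_factors g d.
Proof.
move=> gd; have [ggd|ggd] := eqVneq (g (g d)) d; last exact: balanced_factors_cycle.
have [f /and3P[fd fe gf]|no_f] := pickP [pred f | [&& f != d, f != g d & g f != f]].
  exact: balanced_factors_swap gd ggd fd fe gf.
have g_swap : g = tperm d (g d).
  apply/permP => y; have [->|yd] := eqVneq y d; first by rewrite tpermL.
  have [->|ye] := eqVneq y (g d); first by rewrite tpermR.
  by rewrite tpermD 1?eq_sym //; move: (no_f y); rewrite /= yd ye => /negbFE/eqP.
by move: gA; rewrite Alt_even g_swap odd_tperm eq_sym gd.
Qed.

Lemma balanced_factors_rec d : balanced_factors g d.
Proof.
have [gd|gd] := eqVneq (g d) d; last exact: balanced_factors_moved.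
have [y gy|fixed] := pickP [pred y | g y != y].
  move=> x /(balanced_factors_moved gy)[k [kA sub_k _] bal_k].
  by exists k => //; split=> // _; rewrite gd eqxx.
have -> : g = 1%g by apply/permP => y; move/negbFE/eqP: (fixed y); rewrite perm1.
exact: balanced_factors1.
Qed.
End Induction.

Lemma balanced_factors_Alt g d : g \in Alt -> balanced_factors g d.
Proof.
have [m] := ubnP (mu g); elim: m g d => // m IHm g d lt_gm gA.
apply: balanced_factors_rec => // g' d' lt_g' g'A.
by apply: IHm; rewrite // (leq_trans lt_g').
Qed.
End BalancedFactors.

Theorem lemma2p2 (R : realFieldType) (n : nat) (hn : (1 <= n)%N) (t : R)
    (ht0 : 0 <= t) (ht1 : t <= 1) (g : 'S_n) (hg : g \in ('Alt_('I_n))%g) :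
  exists h k : 'S_n,
    [/\ h \in ('Alt_('I_n))%g, k \in ('Alt_('I_n))%g, g = (h * k)%g,
        `|(mu h)%:R - t * (mu g)%:R| <= 3 / 2
      & `|(mu k)%:R - (1 - t) * (mu g)%:R| <= 3 / 2].
Proof.
have x_range : 0 <= (1 - t) * (mu g)%:R <= (mu g)%:R.
  by have M0 := ler0n R (mu g); apply/andP; split; nra.
have [k [kA _ _] [bal_k bal_h]] := balanced_factors_Alt (Ordinal hn) hg x_range.
have -> : t * (mu g)%:R = (mu g)%:R - (1 - t) * (mu g)%:R by ring.
by exists (g * k^-1)%g, k; split; rewrite ?groupM ?groupV ?mulgKV.
Qed.
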